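(* Fix $\lambda\in\mathbb R$. The following four subsets of $\mathcal X$ are all equal: (a) $\Pi^{(a)}_\lambda=\{x\in\mathcal X: g_\lambda(x)=0\}$; (b) $\Pi^{(b)}_\lambda=\{x\in\mathcal X: H_\lambda(x,0)<H_\lambda(x,1)\}$; (c) $\Pi^{(c)}_\lambda=\{x\in\mathcal X: \exists \sigma\in\Sigma,\ \sigma\neq 0,\ \text{such that } J^{(h_{\sigma,\lambda})}_\lambda(x)<J^{(h_{0,\lambda})}_\lambda(x)\}$; (d) $\Pi^{(d)}_\lambda=\{x\in\mathcal X: \exists \sigma\in\Sigma,\ \sigma\neq 0,\ \text{such that } (1-\beta)\big(L(x,\sigma)-c(x,1)\big)<W_\lambda(x)-\mathbb E[\beta^\sigma W_\lambda(X_\sigma)\mid X_0=x]\}$.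
   Context: A restless bandit (RB) consists of a finite or countable state space $\mathcal X$, action set $\{0,1\}$ (0 = passive, 1 = active), transition matrices $P(0),P(1)$ on $\mathcal X$ ($P_{xy}(a)$ is the probability of moving from $x$ to $y$ under action $a$), and a cost function $c:\mathcal X\times\{0,1\}\to\mathbb R$; $\beta\in(0,1)$ is a discount factor. For $\lambda\in\mathbb R$ let $c_\lambda(x,a)=c(x,a)+\lambda a$. For a (possibly history-dependent) policy $h$, $J^{(h)}_\lambda(x)=(1-\beta)\mathbb E[\sum_{t\ge0}\beta^t c_\lambda(X_t,A_t)\mid X_0=x]$ where actions $A_t$ are chosen by $h$ and $X_{t+1}$ is drawn from $P_{X_t\,\cdot}(A_t)$. Let $V_\lambda$ be the unique fixed point of $V_\lambda(x)=\min\{H_\lambda(x,0),H_\lambda(x,1)\}$, where $H_\lambda(x,a)=(1-\beta)c_\lambda(x,a)+\beta\sum_{y}P_{xy}(a)V_\lambda(y)$. Let $g_\lambda(x)=0$ if $H_\lambda(x,0)<H_\lambda(x,1)$ and $g_\lambda(x)=1$ otherwise (ties broken toward the active action); $g_\lambda$ is an optimal Markov policy for minimizing $J_\lambda$. Let $\Sigma$ be the family of all stopping times with respect to the natural filtration of $\{X_t\}_{t\ge0}$. For $x\in\mathcal X$ and $\tau\in\Sigma$ define $M(x,\tau)=\mathbb E[\beta^\tau\mid X_0=x,\ A_t=0 \text{ for } t<\tau]$, $L(x,\tau)=\mathbb E[\sum_{t=0}^{\tau-1}\beta^t c(X_t,0)+\beta^\tau c(X_\tau,1)\mid X_0=x,\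 A_t=0\text{ for }t<\tau]$, and $W_\lambda(x)=(1-\beta)\lambda+\beta\sum_{y}P_{xy}(1)V_\lambda(y)$. Expectations involving $X_\sigma$ in (d) are under passive actions before time $\sigma$. For $\tau\in\Sigma$, $h_{\tau,\lambda}$ denotes the history-dependent policy that takes the passive action at times $0,\dots,\tau-1$, the active action at time $\tau$, and follows $g_\lambda$ thereafter; $h_{0,\lambda}$ is this policy with $\tau=0$. *)

From HB Require Import structures.
From mathcomp Require Import all_boot all_order all_algebra.
From mathcomp Require Import all_classical all_reals all_analysis.
Set Implicit Arguments. Unset Strict Implicit. Unset Printing Implicit Defensive.
Import Order.TTheory GRing.Theory Num.Theory.
Import numFieldNormedType.Exports.
Local Open Scope classical_set_scope.
Local Open Scope ring_scope.

Section RB.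
Variables (R : realType) (X : countType).

(* Sum over the countable state space: limit of the partial sums along the
   canonical enumeration of X (used only on absolutely summable families). *)
Definition cterm (f : X -> R) (n : nat) : R :=
  match (pickle_inv n : option X) with Some y => f y | None => 0 end.
Definition csum (f : X -> R) : R := limn (series (cterm f)).

Definition tsum (u : nat -> R) : R := limn (series u).

(* A transition kernel: P a x y = P_{xy}(a), a stochastic matrix for each a. *)
Definition stochastic (P : bool -> X -> X -> R) : Prop :=
  (forall a x y, 0 <= P a x y) /\
  (forall a x, series (cterm (P a x)) @ \oo --> (1 : R)).

Definition bounded_cost (c : X -> bool -> R) : Prop :=
  exists M : R, forall x a, `|c x a| <= M.

Definition bounded_fun (V : X -> R) : Prop :=
  exists M : R, forall x, `|V x| <= M.

Definition clam (c : X -> bool -> R) (lam : R) (x : X) (a : bool) : R :=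
  c x a + (if a then lam else 0).

Definition Hq (P : bool -> X -> X -> R) (c : X -> bool -> R) (beta lam : R)
  (V : X -> R) (x : X) (a : bool) : R :=
  (1 - beta) * clam c lam x a + beta * csum (fun y => P a x y * V y).

(* V is the fixed point of the Bellman equation (bounded, hence unique) *)
Definition bellman_fixed_point (P : bool -> X -> X -> R) (c : X -> bool -> R)
  (beta lam : R) (V : X -> R) : Prop :=
  bounded_fun V /\
  forall x, V x = Num.min (Hq P c beta lam V x false) (Hq P c beta lam V x true).

(* g_lambda: passive (false) iff H(x,0) < H(x,1), ties to active *)
Definition gpol P c beta lam V (x : X) : bool :=
  ~~ (Hq P c beta lam V x false < Hq P c beta lam V x true).

(* Histories: a history X_0,...,X_t is represented as (x0, s) with
   x0 = X_0 and s = [:: X_1; ...; X_t]; current state is last x0 s.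
   A deterministic history-dependent policy is h : X -> seq X -> bool. *)

Fixpoint Eh (P : bool -> X -> X -> R) (h : X -> seq X -> bool) (t : nat)
  (f : X -> seq X -> R) (x0 : X) (s : seq X) {struct t} : R :=
  match t with
  | 0 => f x0 s
  | t'.+1 => csum (fun y => P (h x0 s) (last x0 s) y * Eh P h t' f x0 (rcons s y))
  end.

Definition Jpol P c beta lam (h : X -> seq X -> bool) (x : X) : R :=
  (1 - beta) *
  tsum (fun t => beta ^+ t *
        Eh P h t (fun x0 s => clam c lam (last x0 s) (h x0 s)) x [::]).

(* Stopping times w.r.t. the natural filtration of (X_t): a stopping time
   sigma is encoded by stop : X -> seq X -> bool, where
   sigma = the first t such that stop holds on the history X_0..X_t
   (sigma = +oo if there is no such t).  Every stopping time arises so. *)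
Definition notyet (stop : X -> seq X -> bool) (x0 : X) (s : seq X) : bool :=
  all (fun k => ~~ stop x0 (take k s)) (iota 0 (size s)).
(* on a history of length t+1: sigma = t *)
Definition sig_eq stop x0 s := notyet stop x0 s && stop x0 s.
(* sigma > t *)
Definition sig_gt stop x0 s := notyet stop x0 s && ~~ stop x0 s.

Definition stop_nonzero (stop : X -> seq X -> bool) : Prop :=
  ~ (forall y, stop y [::]).

(* h_{sigma,lambda}: passive before sigma, active at sigma, g_lambda after *)
Definition hsig (stop : X -> seq X -> bool) (g : X -> bool) (x0 : X) (s : seq X)
  : bool :=
  if notyet stop x0 s then stop x0 s else g (last x0 s).

Definition stop0 : X -> seq X -> bool := fun _ _ => true.

Definition passive : X -> seq X -> bool := fun _ _ => false.

(* L(x,sigma) = E[ sum_{t<sigma} beta^t c(X_t,0) + beta^sigma c(X_sigma,1) ]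
   under passive actions before sigma (beta^oo = 0). *)
Definition Lfun P c beta (x : X) (stop : X -> seq X -> bool) : R :=
  tsum (fun t => beta ^+ t *
    Eh P passive t (fun x0 s =>
        (if sig_gt stop x0 s then c (last x0 s) false else 0) +
        (if sig_eq stop x0 s then c (last x0 s) true else 0)) x [::]).

Definition Wfun P beta lam (V : X -> R) (x : X) : R :=
  (1 - beta) * lam + beta * csum (fun y => P true x y * V y).

Definition EWsig P beta (W : X -> R) (x : X) (stop : X -> seq X -> bool) : R :=
  tsum (fun t => beta ^+ t *
    Eh P passive t (fun x0 s => if sig_eq stop x0 s then W (last x0 s) else 0)
       x [::]).

Definition Pi_a P c beta lam V : set X := [set x | gpol P c beta lam V x = false].
Definition Pi_b P c beta lam V : set X :=
  [set x | Hq P c beta lam V x false < Hq P c beta lam V x true].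
Definition Pi_c P c beta lam V : set X :=
  [set x | exists stop, stop_nonzero stop /\
     Jpol P c beta lam (hsig stop (gpol P c beta lam V)) x
     < Jpol P c beta lam (hsig stop0 (gpol P c beta lam V)) x].
Definition Pi_d P c beta lam V : set X :=
  [set x | exists stop, stop_nonzero stop /\
     (1 - beta) * (Lfun P c beta x stop - c x true)
     < Wfun P beta lam V x - EWsig P beta (Wfun P beta lam V) x stop].

End RB.

From Pilot Require Import Defs.
From HB Require Import structures.
From mathcomp Require Import all_boot all_order all_algebra.
From mathcomp Require Import all_classical all_reals all_analysis.
From mathcomp Require Import ring.
Set Implicit Arguments. Unset Strict Implicit. Unset Printing Implicit Defensive.
Import Order.TTheory GRing.Theory Num.Theory.
Import numFieldNormedType.Exports.
Local Open Scope classical_set_scope.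
Local Open Scope ring_scope.

(** Everything rests on a telescoping identity: for [U] bounded along histories,
    [sum_t beta^t E[beta E[U_(t+1) | X_0..X_t] - U_t] = - U_0].  With [U_t = V(X_t)]
    it gives, for every policy [h],
      [J^h(x) = V(x) + sum_t beta^t E[H(X_t, A_t) - V(X_t)]],
    and with [U_t = 1{t <= sigma} V(X_t)] under passive actions,
      [(1-beta) L(x,sigma) + E[beta^sigma W(X_sigma)]
         = V(x) + sum_t beta^t E[1{t <= sigma} (H(X_t, 1{t = sigma}) - V(X_t))]].
    As [V = min(H(.,0), H(.,1))] the integrands are nonnegative, so both quantities are
    at least [V(x)]; they vanish after time 0 when the actions follow [g], which gives
    [J^(h_0)(x) = H(x,1)] and the value [H(x,0)] for [sigma] = the first [t >= 1] at
    which [g] is active.  Hence some nonzero [sigma] gets below [H(x,1)] iff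
    [H(x,0) < H(x,1)]: otherwise [V(x) = H(x,1)] is a lower bound.  Condition (d) is the
    same comparison, rewritten with [H(x,1) = (1-beta) c(x,1) + W(x)]. *)

Section Series.
Variable R : realType.

Lemma is_cvg_series_dominated (a b : R ^nat) :
  (forall n, `|a n| <= b n) -> cvgn (series b) -> cvgn (series a).
Proof.
move=> le_ab cvg_b; apply: normed_cvg; apply: (series_le_cvg _ _ le_ab cvg_b) => // n.
exact: le_trans (normr_ge0 _) (le_ab n).
Qed.

Lemma lim_series_head (u : R ^nat) : (forall n, u n.+1 = 0) -> limn (series u) = u 0%N.
Proof.
move=> u_tail0; apply: cvg_lim => //; apply: cvg_near_cst; exists 1%N => // n /=.
case: n => // n _; elim: n => [|n IH]; first by rewrite seriesEnat /= big_nat1.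
by rewrite seriesSr IH u_tail0 addr0.
Qed.

(* [is_cvg_seriesZ] and [lim_seriesZ] for the pointwise product, as it occurs in goals. *)
Lemma is_cvg_seriesMl (a : R ^nat) (k : R) :
  cvgn (series a) -> cvgn (series (fun n => k * a n)).
Proof. exact: is_cvg_seriesZ. Qed.

Lemma lim_seriesMl (a : R ^nat) (k : R) :
  cvgn (series a) -> limn (series (fun n => k * a n)) = k * limn (series a).
Proof. exact: lim_seriesZ. Qed.

Variable beta : R.
Hypotheses (beta_ge0 : 0 <= beta) (beta_lt1 : beta < 1).

Lemma is_cvg_discounted (a : R ^nat) (M : R) : (forall t, `|a t| <= M) ->
  cvgn (series (fun t => beta ^+ t * a t)).
Proof.
move=> le_aM; apply: (@is_cvg_series_dominated _ (geometric M beta)).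
  by move=> t; rewrite normrM ger0_norm ?exprn_ge0 // mulrC ler_wpM2r ?exprn_ge0.
by apply: is_cvg_geometric_series; rewrite ger0_norm.
Qed.

End Series.

Section CountableSum.
Variables (R : realType) (X : countType).

Definition prob_vector (p : X -> R) : Prop :=
  (forall y, 0 <= p y) /\ series (cterm p) @ \oo --> (1 : R).

Lemma stochasticP (P : bool -> X -> X -> R) :
  stochastic P -> forall a x, prob_vector (P a x).
Proof. by case=> P_ge0 P_sum1 a x; split. Qed.

Variable p : X -> R.
Hypothesis p_prob : prob_vector p.

Lemma is_cvg_csum (u : X -> R) (M : R) : (forall y, `|u y| <= M) ->
  cvgn (series (cterm (fun y => p y * u y))).
Proof.
case: p_prob => p_ge0 p_sum1 le_uM.
apply: (@is_cvg_series_dominated _ _ (fun n => M * cterm p n)); last first.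
  exact/is_cvg_seriesMl/(cvgP _ p_sum1).
move=> n; rewrite /cterm; case: (pickle_inv n) => [y|] /=; last by rewrite normr0 mulr0.
by rewrite normrM ger0_norm // mulrC ler_wpM2r.
Qed.

Lemma csumD (u v : X -> R) (M N : R) : (forall y, `|u y| <= M) -> (forall y, `|v y| <= N) ->
  csum (fun y => p y * (u y + v y)) = csum (fun y => p y * u y) + csum (fun y => p y * v y).
Proof.
move=> le_uM le_vN.
rewrite /csum -lim_seriesD; [|exact: is_cvg_csum le_uM|exact: is_cvg_csum le_vN].
congr (limn (series _)); apply/funext => n; rewrite addrfctE /cterm.
case: (pickle_inv n) => [y|]; by rewrite ?mulrDr ?addr0.
Qed.

Lemma csumZ (u : X -> R) (M k : R) : (forall y, `|u y| <= M) ->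
  csum (fun y => p y * (k * u y)) = k * csum (fun y => p y * u y).
Proof.
move=> le_uM; rewrite /csum.
have -> : cterm (fun y => p y * (k * u y)) = fun n => k * cterm (fun y => p y * u y) n.
  by apply/funext => n; rewrite /cterm; case: (pickle_inv n) => [y|]; [rewrite mulrCA | rewrite mulr0].
exact/lim_seriesMl/(is_cvg_csum le_uM).
Qed.

Lemma csum_cst (k : R) : csum (fun y => p y * k) = k.
Proof.
case: p_prob => _ p_sum1; rewrite /csum.
have -> : cterm (fun y => p y * k) = fun n => k * cterm p n.
  by apply/funext => n; rewrite /cterm; case: (pickle_inv n) => [y|]; [rewrite mulrC | rewrite mulr0].
by rewrite lim_seriesMl ?(cvg_lim _ p_sum1) ?mulr1 //; exact: cvgP p_sum1.
Qed.

Lemma ler_csum (u v : X -> R) (M N : R) : (forall y, `|u y| <= M) -> (forall y, `|v y| <= N) ->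
  (forall y, u y <= v y) -> csum (fun y => p y * u y) <= csum (fun y => p y * v y).
Proof.
case: p_prob => p_ge0 _ le_uM le_vN le_uv.
apply: lim_series_le; [exact: is_cvg_csum le_uM | exact: is_cvg_csum le_vN |].
by move=> n; rewrite /cterm; case: (pickle_inv n) => [y|] //; rewrite ler_wpM2l.
Qed.

Lemma csum_bounded (u : X -> R) (M : R) : (forall y, `|u y| <= M) ->
  `|csum (fun y => p y * u y)| <= M.
Proof.
move=> le_uM; have le_cst (k : R) (y : X) : `|k| <= `|k| by [].
have /all_and2[u_geNM u_leM] y : - M <= u y /\ u y <= M.
  by apply/andP; rewrite -ler_norml.
rewrite ler_norml; apply/andP; split.
  by rewrite -[X in X <= _](csum_cst (- M)); exact: ler_csum (le_cst _) le_uM u_geNM.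
by rewrite -[X in _ <= X](csum_cst M); exact: ler_csum le_uM (le_cst _) u_leM.
Qed.

End CountableSum.

Section BoundedHistory.
Variables (R : realType) (X : countType).

Definition bounded_hist (f : X -> seq X -> R) : Prop :=
  exists M, forall x0 s, `|f x0 s| <= M.

Lemma bounded_histD f g : bounded_hist f -> bounded_hist g ->
  bounded_hist (fun x0 s => f x0 s + g x0 s).
Proof.
move=> [M le_fM] [N le_gN]; exists (M + N) => x0 s.
exact: le_trans (ler_normD _ _) (lerD (le_fM x0 s) (le_gN x0 s)).
Qed.

Lemma bounded_histB f g : bounded_hist f -> bounded_hist g ->
  bounded_hist (fun x0 s => f x0 s - g x0 s).
Proof.
move=> [M le_fM] [N le_gN]; exists (M + N) => x0 s.
exact: le_trans (ler_normB _ _) (lerD (le_fM x0 s) (le_gN x0 s)).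
Qed.

Lemma bounded_histZ (k : R) f : bounded_hist f -> bounded_hist (fun x0 s => k * f x0 s).
Proof. by move=> [M le_fM]; exists (`|k| * M) => x0 s; rewrite normrM ler_wpM2l. Qed.

Lemma bounded_hist_if (b : X -> seq X -> bool) f : bounded_hist f ->
  bounded_hist (fun x0 s => if b x0 s then f x0 s else 0).
Proof.
move=> [M le_fM]; exists M => x0 s; case: (b x0 s) => //.
by rewrite normr0 (le_trans _ (le_fM x0 s)).
Qed.

End BoundedHistory.

Section Expectation.
Variables (R : realType) (X : countType) (P : bool -> X -> X -> R).
Hypothesis P_prob : forall a x, prob_vector (P a x).
Variable h : X -> seq X -> bool.

Definition next_expect (f : X -> seq X -> R) (x0 : X) (s : seq X) : R :=
  csum (fun y => P (h x0 s) (last x0 s) y * f x0 (rcons s y)).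

Lemma next_expect_last (u : X -> R) x0 s :
  next_expect (fun x0 s => u (last x0 s)) x0 s =
  csum (fun y => P (h x0 s) (last x0 s) y * u y).
Proof. by congr csum; apply/funext => y; rewrite last_rcons. Qed.

Lemma Eh_next t f x0 s : Eh P h t.+1 f x0 s = Eh P h t (next_expect f) x0 s.
Proof.
elim: t s => [|t IH] s //.
have -> : Eh P h t.+2 f x0 s =
  csum (fun y => P (h x0 s) (last x0 s) y * Eh P h t.+1 f x0 (rcons s y)) by [].
by rewrite [RHS]/=; congr csum; apply/funext => y; rewrite IH.
Qed.

Lemma Eh_bounded f (M : R) : (forall x0 s, `|f x0 s| <= M) ->
  forall t x0 s, `|Eh P h t f x0 s| <= M.
Proof. by move=> le_fM; elim=> [|t IH] x0 s //=; exact: csum_bounded. Qed.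

Lemma bounded_next_expect f : bounded_hist f -> bounded_hist (next_expect f).
Proof. by move=> [M le_fM]; exists M => x0 s; exact: csum_bounded. Qed.

Lemma Eh0 t x0 s : Eh P h t (fun _ _ => 0) x0 s = 0.
Proof.
elim: t s => [|t IH] s //=.
rewrite -[RHS](csum_cst (P_prob (h x0 s) (last x0 s)) 0).
by congr csum; apply/funext => y; rewrite IH.
Qed.

Lemma EhD f g : bounded_hist f -> bounded_hist g -> forall t x0 s,
  Eh P h t (fun x0 s => f x0 s + g x0 s) x0 s = Eh P h t f x0 s + Eh P h t g x0 s.
Proof.
move=> [M le_fM] [N le_gN]; elim=> [|t IH] x0 s //=.
rewrite -(csumD (P_prob _ _) (fun y => Eh_bounded le_fM t x0 (rcons s y))
                             (fun y => Eh_bounded le_gN t x0 (rcons s y))).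
by congr csum; apply/funext => y; rewrite IH.
Qed.

Lemma EhZ (k : R) f : bounded_hist f -> forall t x0 s,
  Eh P h t (fun x0 s => k * f x0 s) x0 s = k * Eh P h t f x0 s.
Proof.
move=> [M le_fM]; elim=> [|t IH] x0 s //=.
rewrite -(csumZ (P_prob _ _) k (fun y => Eh_bounded le_fM t x0 (rcons s y))).
by congr csum; apply/funext => y; rewrite IH.
Qed.

Lemma EhB f g : bounded_hist f -> bounded_hist g -> forall t x0 s,
  Eh P h t (fun x0 s => f x0 s - g x0 s) x0 s = Eh P h t f x0 s - Eh P h t g x0 s.
Proof.
move=> bf bg t x0 s; rewrite -mulN1r -EhZ // -EhD //; last exact: bounded_histZ.
by congr Eh; apply/funext => x1; apply/funext => s1; rewrite mulN1r.
Qed.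

Lemma Eh_ge0 f : bounded_hist f -> (forall x0 s, 0 <= f x0 s) ->
  forall t x0 s, 0 <= Eh P h t f x0 s.
Proof.
move=> [M le_fM] f_ge0; elim=> [|t IH] x0 s //=.
rewrite -(csum_cst (P_prob (h x0 s) (last x0 s)) 0).
apply: (ler_csum (P_prob _ _) (M := 0) (N := M)) => y; last exact: IH.
  by rewrite normr0.
exact: Eh_bounded.
Qed.

Variable beta : R.
Hypotheses (beta_ge0 : 0 <= beta) (beta_lt1 : beta < 1).

Definition discounted (f : X -> seq X -> R) (x : X) : R :=
  tsum (fun t => beta ^+ t * Eh P h t f x [::]).

Lemma is_cvg_discounted_Eh f x : bounded_hist f ->
  cvgn (series (fun t => beta ^+ t * Eh P h t f x [::])).
Proof.
by move=> [M le_fM]; apply: (is_cvg_discounted beta_ge0 beta_lt1 (M := M)) => t; exact: Eh_bounded.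
Qed.

Lemma discountedD f g x : bounded_hist f -> bounded_hist g ->
  discounted (fun x0 s => f x0 s + g x0 s) x = discounted f x + discounted g x.
Proof.
move=> bf bg; rewrite /discounted /tsum -lim_seriesD; try exact: is_cvg_discounted_Eh.
by congr (limn (series _)); apply/funext => t; rewrite addrfctE EhD // mulrDr.
Qed.

Lemma discountedZ (k : R) f x : bounded_hist f ->
  discounted (fun x0 s => k * f x0 s) x = k * discounted f x.
Proof.
move=> bf; rewrite /discounted /tsum -lim_seriesMl; last exact: is_cvg_discounted_Eh.
by congr (limn (series _)); apply/funext => t; rewrite EhZ // mulrCA.
Qed.

Lemma discounted_ge0 f x : bounded_hist f -> (forall x0 s, 0 <= f x0 s) ->
  0 <= discounted f x.
Proof.
move=> bf f_ge0; rewrite /discounted /tsum; apply: limr_ge; first exact: is_cvg_discounted_Eh.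
by apply: nearW => n; rewrite seriesEord /=; apply: sumr_ge0 => t _; rewrite mulr_ge0 ?exprn_ge0 ?Eh_ge0.
Qed.

Lemma discounted_head f x : (forall x0 s, s != [::] -> f x0 s = 0) ->
  discounted f x = f x [::].
Proof.
move=> f_tail0; rewrite /discounted /tsum lim_series_head ?expr0 ?mul1r // => t.
rewrite Eh_next; have -> : next_expect f = fun _ _ => 0.
  apply/funext => x0; apply/funext => s.
  rewrite -(csum_cst (P_prob (h x0 s) (last x0 s)) 0).
  by congr csum; apply/funext => y; rewrite f_tail0 //; case: s.
by rewrite Eh0 mulr0.
Qed.

Lemma discounted_telescope U x : bounded_hist U ->
  discounted (fun x0 s => beta * next_expect U x0 s - U x0 s) x = - U x [::].
Proof.
move=> bU; set u := fun t => beta ^+ t * Eh P h t U x [::].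
have bN := bounded_next_expect bU.
rewrite /discounted /tsum (_ : (fun t => _) = telescope u); last first.
  apply/funext => t; rewrite /telescope /u EhB //; last exact: bounded_histZ.
  by rewrite EhZ // -Eh_next /= exprSr mulrBr mulrA.
rewrite telescopeK; apply: cvg_lim => //.
rewrite (_ : - U x [::] = 0 - u 0%N); last by rewrite /u expr0 mul1r sub0r.
apply: cvgB; last exact: cvg_cst.
by have := cvg_series_cvg_0 (is_cvg_discounted_Eh (x := x) bU).
Qed.

Lemma discounted_shift F U x : bounded_hist F -> bounded_hist U ->
  discounted F x = U x [::] +
    discounted (fun x0 s => F x0 s + (beta * next_expect U x0 s - U x0 s)) x.
Proof.
move=> bF bU; have bN := bounded_histZ beta (bounded_next_expect bU).
rewrite discountedD // ?discounted_telescope //; last exact: bounded_histB.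
by rewrite addrCA subrr addr0.
Qed.

End Expectation.

Section StoppingTimes.
Variables (R : realType) (X : countType) (P : bool -> X -> X -> R).
Hypothesis P_prob : forall a x, prob_vector (P a x).
Implicit Types (stop : X -> seq X -> bool) (g : X -> bool).

Definition first_active g : X -> seq X -> bool :=
  fun x0 s => (s != [::]) && g (last x0 s).

Lemma stop_nonzero_first_active g (x : X) : stop_nonzero (first_active g).
Proof. by move=> /(_ x). Qed.

Lemma hsig_stop0 g x0 s : s != [::] -> hsig (@stop0 X) g x0 s = g (last x0 s).
Proof. by case: s. Qed.

Lemma hsig_first_active g x0 s : s != [::] -> hsig (first_active g) g x0 s = g (last x0 s).
Proof. by rewrite /hsig /first_active => ->; case: notyet. Qed.

Lemma notyet_rcons stop x0 s y : notyet stop x0 (rcons s y) = sig_gt stop x0 s.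
Proof.
rewrite /sig_gt /notyet size_rcons -addn1 iotaD all_cat /= add0n -cats1 take_size_cat //.
rewrite andbT; congr (_ && _); apply: eq_in_all => k; rewrite mem_iota add0n => /andP[_ lt_ks].
by rewrite takel_cat // ltnW.
Qed.

Lemma next_expect_notyet stop (u : X -> R) x0 s :
  next_expect P (@passive X) (fun x0 s => if notyet stop x0 s then u (last x0 s) else 0) x0 s =
  if sig_gt stop x0 s then csum (fun y => P false (last x0 s) y * u y) else 0.
Proof.
rewrite /next_expect; under [X in csum X]funext => y do rewrite notyet_rcons last_rcons.
by case: sig_gt; rewrite ?csum_cst.
Qed.

End StoppingTimes.

Section Bellman.
Variables (R : realType) (X : countType) (P : bool -> X -> X -> R).
Variables (c : X -> bool -> R) (beta lam : R) (V : X -> R).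
Hypotheses (beta01 : 0 < beta < 1) (P_stoch : stochastic P).
Hypotheses (c_bounded : bounded_cost c) (V_fixed : bellman_fixed_point P c beta lam V).

Local Notation H := (Hq P c beta lam V).
Local Notation g := (gpol P c beta lam V).
Local Notation W := (Wfun P beta lam V).

Let P_prob := stochasticP P_stoch.
Let beta_ge0 : 0 <= beta. Proof. by case/andP: beta01 => /ltW. Qed.
Let beta_lt1 : beta < 1. Proof. by case/andP: beta01. Qed.

Lemma V_le_Hq x a : V x <= H x a.
Proof. by rewrite V_fixed.2; case: a; rewrite ge_min lexx ?orbT. Qed.

Lemma Hq_gpol x : H x (g x) = V x.
Proof.
rewrite [RHS]V_fixed.2 /gpol.
by case lt_01: (_ < _) => /=; [rewrite min_l // ltW | rewrite min_r // leNgt lt_01].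
Qed.

Lemma V_eq_Hq_active x : H x true <= H x false -> V x = H x true.
Proof. by move=> le_10; rewrite V_fixed.2 min_r. Qed.

Lemma Hq_activeE x : H x true = (1 - beta) * c x true + W x.
Proof. by rewrite /Hq /clam /Wfun; ring. Qed.

Lemma bounded_clam : exists M, forall x a, `|clam c lam x a| <= M.
Proof.
have [M le_cM] := c_bounded; exists (M + `|lam|) => x a.
rewrite /clam (le_trans (ler_normD _ _)) // lerD //.
by case: a => //; rewrite normr0.
Qed.

Lemma bounded_Hq : exists M, forall x a, `|H x a| <= M.
Proof.
have [M le_clamM] := bounded_clam; have [MV le_VM] := V_fixed.1.
exists (`|1 - beta| * M + `|beta| * MV) => x a.
rewrite /Hq (le_trans (ler_normD _ _)) // lerD // normrM ler_wpM2l //.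
exact: csum_bounded.
Qed.

Lemma bounded_W : exists M, forall x, `|W x| <= M.
Proof.
have [MV le_VM] := V_fixed.1; exists (`|(1 - beta) * lam| + `|beta| * MV) => x.
rewrite /Wfun (le_trans (ler_normD _ _)) // lerD // normrM ler_wpM2l //.
exact: csum_bounded.
Qed.

Lemma bounded_advantage (a : X -> seq X -> bool) :
  bounded_hist (fun x0 s => H (last x0 s) (a x0 s) - V (last x0 s)).
Proof.
have [MH le_HM] := bounded_Hq; have [MV le_VM] := V_fixed.1.
by apply: bounded_histB; [exists MH | exists MV].
Qed.

Lemma Jpol_shift h x : Jpol P c beta lam h x =
  V x + discounted P h beta (fun x0 s => H (last x0 s) (h x0 s) - V (last x0 s)) x.
Proof.
have [Mc le_clamM] := bounded_clam; have [MV le_VM] := V_fixed.1.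
have bC : bounded_hist (fun x0 s => clam c lam (last x0 s) (h x0 s)) by exists Mc.
have bV : bounded_hist (fun x0 s => V (last x0 s)) by exists MV.
rewrite /Jpol -/(discounted P h beta _ x) -(discountedZ P_prob _ beta_ge0 beta_lt1 _ _ bC).
rewrite (discounted_shift P_prob _ beta_ge0 beta_lt1 _ (bounded_histZ _ bC) bV).
congr (_ + discounted _ _ _ _ _); apply/funext => x0; apply/funext => s.
by rewrite next_expect_last /Hq; ring.
Qed.

Lemma Jpol_ge_V h x : V x <= Jpol P c beta lam h x.
Proof.
rewrite Jpol_shift lerDl.
apply: (discounted_ge0 P_prob _ beta_ge0 beta_lt1 _ (bounded_advantage h)) => x0 s.
by rewrite subr_ge0 V_le_Hq.
Qed.

Lemma Jpol_follow h x : (forall x0 s, s != [::] -> h x0 s = g (last x0 s)) ->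
  Jpol P c beta lam h x = H x (h x [::]).
Proof.
move=> h_follows; rewrite Jpol_shift (discounted_head P_prob) => [|x0 s s_nil].
  by rewrite /= addrC subrK.
by rewrite h_follows // Hq_gpol subrr.
Qed.

Lemma Jpol_stop0 x : Jpol P c beta lam (hsig (@stop0 X) g) x = H x true.
Proof. exact/Jpol_follow/hsig_stop0. Qed.

Lemma Jpol_first_active x : Jpol P c beta lam (hsig (first_active g) g) x = H x false.
Proof. exact/Jpol_follow/hsig_first_active. Qed.

Definition stopped_value (stop : X -> seq X -> bool) (x : X) : R :=
  (1 - beta) * Defs.Lfun P c beta x stop + EWsig P beta W x stop.

Lemma stopped_value_shift stop x : stopped_value stop x =
  V x + discounted P (@passive X) beta (fun x0 s =>
    if notyet stop x0 s then H (last x0 s) (stop x0 s) - V (last x0 s) else 0) x.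
Proof.
have [Mc le_cM] := c_bounded; have [MW le_WM] := bounded_W; have [MV le_VM] := V_fixed.1.
pose cost x0 s := (if sig_gt stop x0 s then c (last x0 s) false else 0) +
                  (if sig_eq stop x0 s then c (last x0 s) true else 0).
pose reward x0 s := if sig_eq stop x0 s then W (last x0 s) else 0.
have b_cost : bounded_hist cost by apply: bounded_histD; apply: bounded_hist_if; exists Mc.
have b_reward : bounded_hist reward by apply: bounded_hist_if; exists MW.
have bV : bounded_hist (fun x0 s => if notyet stop x0 s then V (last x0 s) else 0).
  by apply: bounded_hist_if; exists MV.
have -> : stopped_value stop x = discounted P (@passive X) beta
    (fun x0 s => (1 - beta) * cost x0 s + reward x0 s) x.
  rewrite discountedD ?discountedZ //; exact: bounded_histZ.
rewrite (discounted_shift P_prob _ beta_ge0 beta_lt1 _ _ bV); last first.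
  by apply: bounded_histD => //; exact: bounded_histZ.
congr (_ + discounted _ _ _ _ _); apply/funext => x0; apply/funext => s.
rewrite (next_expect_notyet P_prob) /cost /reward /sig_gt /sig_eq.
by case: (notyet stop x0 s); case: (stop x0 s) => /=; rewrite /Hq /clam /Wfun; ring.
Qed.

Lemma stopped_value_ge_V stop x : V x <= stopped_value stop x.
Proof.
rewrite stopped_value_shift lerDl.
apply: (discounted_ge0 P_prob _ beta_ge0 beta_lt1 _ (bounded_hist_if _ (bounded_advantage stop))).
by move=> x0 s; case: ifP => // _; rewrite subr_ge0 V_le_Hq.
Qed.

Lemma stopped_value_first_active x : stopped_value (first_active g) x = H x false.
Proof.
rewrite stopped_value_shift (discounted_head P_prob) => [|x0 s s_nil].
  by rewrite /= addrC subrK.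
by rewrite /first_active s_nil /=; case: ifP => // _; rewrite Hq_gpol subrr.
Qed.

Lemma lt_Hq_iff_exists_stop (value : (X -> seq X -> bool) -> R) x :
  (forall stop, V x <= value stop) -> value (first_active g) = H x false ->
  H x false < H x true <-> exists stop, stop_nonzero stop /\ value stop < H x true.
Proof.
move=> V_le_value value_first; split=> [lt_01|[stop [_ lt_value]]].
  exists (first_active g); rewrite value_first; split=> //.
  exact: stop_nonzero_first_active x.
rewrite ltNge; apply/negP => /V_eq_Hq_active V_eq.
by move: (le_lt_trans (V_le_value stop) lt_value); rewrite V_eq ltxx.
Qed.

Lemma Pi_a_eq_b : Pi_a P c beta lam V = Pi_b P c beta lam V.
Proof. by apply/funext => x; rewrite /Pi_a /Pi_b /= /gpol; apply/propext; case: (_ < _). Qed.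

Lemma Pi_b_eq_c : Pi_b P c beta lam V = Pi_c P c beta lam V.
Proof.
apply/funext => x; apply/propext; rewrite /Pi_b /Pi_c /= Jpol_stop0.
apply: (lt_Hq_iff_exists_stop (value := fun stop => Jpol P c beta lam (hsig stop g) x)).
  by move=> stop; exact: Jpol_ge_V.
exact: Jpol_first_active.
Qed.

Lemma Pi_d_ineqE stop x :
  ((1 - beta) * (Defs.Lfun P c beta x stop - c x true) < W x - EWsig P beta W x stop) =
  (stopped_value stop x < H x true).
Proof.
rewrite -[LHS]subr_gt0 -[RHS]subr_gt0 Hq_activeE /stopped_value.
by congr (0 < _); ring.
Qed.

Lemma Pi_b_eq_d : Pi_b P c beta lam V = Pi_d P c beta lam V.
Proof.
apply/funext => x; apply/propext; rewrite /Pi_b /Pi_d /=.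
under eq_exists => stop do rewrite Pi_d_ineqE.
apply: (lt_Hq_iff_exists_stop (value := stopped_value^~ x)).
  by move=> stop; exact: stopped_value_ge_V.
exact: stopped_value_first_active.
Qed.

End Bellman.

Theorem proposition1 (R : realType) (X : countType)
  (P : bool -> X -> X -> R) (c : X -> bool -> R) (beta lam : R) (V : X -> R) :
  0 < beta < 1 ->
  stochastic P ->
  bounded_cost c ->
  bellman_fixed_point P c beta lam V ->
  Pi_a P c beta lam V = Pi_b P c beta lam V /\
  Pi_b P c beta lam V = Pi_c P c beta lam V /\
  Pi_c P c beta lam V = Pi_d P c beta lam V.
Proof.
move=> beta01 P_stoch c_bounded V_fixed.
have Pi_bc : Pi_b P c beta lam V = Pi_c P c beta lam V by apply: Pi_b_eq_c.
split; first exact: Pi_a_eq_b.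
split=> //; rewrite -Pi_bc; exact: Pi_b_eq_d.
Qed.
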